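(* Let $1\le l\le r$ and consider a canonical noiseless MMV model $B=AX$ in which $A$ satisfies $0\le \delta^L_{2k-r+l}(A)<1$ and the nonzero rows of $X$ are in general position. Let $I\subset\{1,\dots,n\}$ be an index set with $|I|\le \min(2(k-r)+l,\,k)$ and $|I\setminus \operatorname{supp}X|\le k-r+l$. Then the following are equivalent: (i) $|I\cap \operatorname{supp}X|\ge k-r+1$; (ii) $\operatorname{rank}[A_I~B]<|I|+r$.
   Context: Canonical MMV setting: $m,n,r,k$ are positive integers with $r\le m<n$ and $r\le k$. $A\in\mathbb{R}^{m\times n}$ is the sensing matrix with columns $\mathbf a_1,\dots,\mathbf a_n$; $X\in\mathbb{R}^{n\times r}$ has rows $\mathbf x^1,\dots,\mathbf x^n$, $\operatorname{supp}X=\{i:\mathbf x^i\neq 0\}$ and $|\operatorname{supp}X|=k$; $B=AX\in\mathbb{R}^{m\times r}$ has full column rank $r$. For an index set $I$, $A_I$ is the submatrix of $A$ formed by the columns indexed by $I$, and $[A_I~B]$ denotes horizontal concatenation. The lower restricted isometry constant $\delta^L_s(A)$ is the smallest $\delta\ge0$ such that $(1-\delta)\|\mathbf x\|_2^2\le\|A\mathbf x\|_2^2$ for all $\mathbf x\in\mathbb{R}^n$ with at most $s$ nonzero entries; thus $\delta^L_s(A)<1$ means every $s$ columns of $A$ are linearly independent. ''The nonzero rows of $X$ are in general position'' means any $r$ of the $k$ nonzero rows of $X$ (vectors in $\mathbb{R}^r$) are linearly independent. *)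

From HB Require Import structures.
From mathcomp Require Import all_boot all_order all_algebra.
Set Implicit Arguments. Unset Strict Implicit. Unset Printing Implicit Defensive.
Import Order.TTheory GRing.Theory Num.Theory.
Local Open Scope ring_scope.

Definition sqnorm (R : realFieldType) (p : nat) (v : 'cV[R]_p) : R :=
  \sum_(i < p) v i 0 ^+ 2.

Definition nnz (R : realFieldType) (p : nat) (v : 'cV[R]_p) : nat :=
  #|[set i : 'I_p | v i 0 != 0]|.

Definition lower_rip_ok (R : realFieldType) (m n s : nat) (A : 'M[R]_(m, n)) (d : R) :=
  0 <= d /\ forall x : 'cV[R]_n, (nnz x <= s)%N -> (1 - d) * sqnorm x <= sqnorm (A *m x).

(* delta^L_s(A) < 1 : the smallest admissible delta is < 1, i.e. some admissible delta < 1 *)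
Definition lower_ric_lt1 (R : realFieldType) (m n s : nat) (A : 'M[R]_(m, n)) : Prop :=
  exists d : R, lower_rip_ok s A d /\ d < 1.

Definition rsupp (R : realFieldType) (n r : nat) (X : 'M[R]_(n, r)) : {set 'I_n} :=
  [set i : 'I_n | row i X != 0].

Definition rows_general_position (R : realFieldType) (n r : nat) (X : 'M[R]_(n, r)) : Prop :=
  forall S : {set 'I_n}, S \subset rsupp X -> #|S| = r ->
    free [seq row i X | i <- enum S].

Definition colsI (R : realFieldType) (m n : nat) (A : 'M[R]_(m, n)) (I : {set 'I_n})
  : 'M[R]_(m, #|I|) := colsub (@enum_val _ (mem I)) A.

From HB Require Import structures.
From mathcomp Require Import all_boot all_order all_algebra zify.
Set Implicit Arguments. Unset Strict Implicit. Unset Printing Implicit Defensive.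
Import Order.TTheory GRing.Theory Num.Theory.
Local Open Scope ring_scope.

(* Write S = supp X and let E_I be the n x |I| matrix whose columns are the
   standard basis vectors e_i, i in I.  Then [A_I B] = A M with M = [E_I X],
   and every nonzero row of M lies in I u S, a set of at most
   |I \ S| + |S| <= 2k - r + l indices.  The lower RIP hypothesis says that A
   is injective on vectors supported there, hence rank [A_I B] = rank M.
   For M itself:
   - if |S \ I| < r, all rows of M lie in I u S, so
     rank M <= |I u S| = |I| + |S \ I| < |I| + r;
   - if |S \ I| >= r, the columns of M are independent: a relation
     E_I a + X b = 0 restricted to the rows in S \ I makes b orthogonal to
     r rows of X, which span R^r by general position, so b = 0 and then a = 0.
   So rank [A_I B] < |I| + r iff |S \ I| < r iff |I n S| >= k - r + 1.
   The file proves, in order: the RIP injectivity, the rank bounds for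
   row-supported matrices, the general-position orthogonality argument, the
   independence of the columns of [E_I X], and finally the theorem. *)

Lemma sqnorm_le0 (R : realFieldType) (p : nat) (x : 'cV[R]_p) :
  sqnorm x <= 0 -> x = 0.
Proof.
move=> x_le0; have x0 : sqnorm x = 0.
  by apply/eqP; rewrite eq_le x_le0 sumr_ge0 // => i _; rewrite sqr_ge0.
apply/matrixP => i j; rewrite !ord1 mxE.
have /eqP := @psumr_eq0P _ _ xpredT _ (fun i _ => sqr_ge0 (x i 0)) x0 i isT.
by rewrite sqrf_eq0 => /eqP.
Qed.

Lemma lower_ric_inj (R : realFieldType) (m n s : nat) (A : 'M[R]_(m, n))
    (x : 'cV[R]_n) :
  lower_ric_lt1 s A -> (nnz x <= s)%N -> A *m x = 0 -> x = 0.
Proof.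
move=> [d [[d_ge0 rip] d_lt1]] x_sparse Ax0; apply: sqnorm_le0.
have := rip x x_sparse; rewrite Ax0.
have -> : sqnorm (0 : 'cV[R]_m) = 0.
  by rewrite /sqnorm big1 // => i _; rewrite mxE expr0n.
by rewrite pmulr_rle0 // subr_gt0.
Qed.

Lemma rank_row_supported (R : fieldType) (n p : nat) (T : {set 'I_n})
    (N : 'M[R]_(n, p)) :
  (forall j c, j \notin T -> N j c = 0) -> (\rank N <= #|T|)%N.
Proof.
move=> N_out; have /submxP[D ->] : (N <= rowsub (@enum_val _ (mem T)) N)%MS.
  apply/row_subP => j; case: (boolP (j \in T)) => jT.
    by rewrite -(enum_rankK_in jT jT) -row_rowsub row_sub.
  by rewrite (_ : row j N = 0) ?sub0mx //; apply/rowP => c; rewrite !mxE N_out.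
exact: leq_trans (mxrankM_maxr _ _) (rank_leq_row _).
Qed.

Lemma nnz_supported (R : realFieldType) (n : nat) (T : {set 'I_n})
    (x : 'cV[R]_n) :
  (forall j, j \notin T -> x j 0 = 0) -> (nnz x <= #|T|)%N.
Proof.
move=> x_out; apply: subset_leq_card; apply/subsetP => j.
by rewrite inE; apply: contraR => /x_out ->.
Qed.

(* If A is injective on s-sparse vectors (delta^L_s(A) < 1) and the rows of M
   vanish outside a set of at most s indices, then A does not lower the rank
   of M: the column space of M meets the kernel of A trivially. *)
Lemma rank_mul_lower_ric (R : realFieldType) (m n p s : nat)
    (A : 'M[R]_(m, n)) (M : 'M[R]_(n, p)) (T : {set 'I_n}) :
  lower_ric_lt1 s A -> (#|T| <= s)%N ->
  (forall j c, j \notin T -> M j c = 0) ->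
  \rank (A *m M) = \rank M.
Proof.
move=> ric T_small M_out.
rewrite -mxrank_tr trmx_mul -(mxrank_tr M) -[RHS](mxrank_mul_ker M^T A^T).
suff -> : (M^T :&: kermx A^T)%MS = 0 by rewrite mxrank0 addn0.
apply/eqP; rewrite -submx0; apply/rV_subP => v.
rewrite sub_capmx => /andP[/submxP[u ->] /sub_kermxP uMA0].
have AMu0 : A *m (M *m u^T) = 0.
  by apply: trmx_inj; rewrite !trmx_mul trmxK uMA0 trmx0.
suff Mu0 : M *m u^T = 0 by rewrite -[u]trmxK -trmx_mul Mu0 trmx0 sub0mx.
apply: (lower_ric_inj ric) AMu0; apply: leq_trans T_small.
apply: nnz_supported => j jT; rewrite mxE big1 // => c _.
by rewrite M_out ?mul0r.
Qed.

Lemma self_orth0 (R : realFieldType) (r : nat) (b : 'cV[R]_r) :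
  b^T *m b = 0 -> b = 0.
Proof.
move=> /(congr1 (fun M : 'M_1 => M 0 0)); rewrite !mxE => bb0.
apply/colP => c; rewrite mxE; apply/eqP; rewrite -sqrf_eq0 expr2; apply/eqP.
have := @psumr_eq0P _ _ xpredT (fun i => b i 0 * b i 0) _ _ c isT; apply.
- by move=> i _; rewrite -expr2 sqr_ge0.
- by rewrite -[RHS]bb0; apply: eq_bigr => i _; rewrite mxE.
Qed.

(* A vector orthogonal to a basis of R^r (a free family of r row vectors)
   is zero: it is orthogonal to its own transpose, which they span. *)
Lemma orth_basis0 (R : realFieldType) (r : nat) (s : seq 'rV[R]_r)
    (b : 'cV[R]_r) :
  free s -> size s = r -> (forall v, v \in s -> v *m b = 0) -> b = 0.
Proof.
move=> s_free s_size s_orth; apply: self_orth0.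
have s_full : (<<s>> = fullv)%VS.
  apply/eqP; rewrite eqEdim subvf dimvf /= (eqnP s_free) s_size.
  by rewrite dim_matrix mul1r.
have := memvf b^T; rewrite -s_full => bT_span.
rewrite (coord_span (bT_span : b^T \in <<in_tuple s>>%VS)) mulmx_suml big1 // => i _.
by rewrite -scalemxAl s_orth ?scaler0 // mem_nth.
Qed.

Lemma general_position_orth0 (R : realFieldType) (n r : nat)
    (X : 'M[R]_(n, r)) (T : {set 'I_n}) (b : 'cV[R]_r) :
  rows_general_position X -> T \subset rsupp X -> (r <= #|T|)%N ->
  (forall j, j \in T -> row j X *m b = 0) -> b = 0.
Proof.
move=> gp T_supp T_large T_orth.
pose s := take r (enum T).
have s_uniq : uniq s by rewrite take_uniq // enum_uniq.
have s_size : size s = r by rewrite size_takel // -cardE.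
have s_sub : {subset s <= T} by move=> j /mem_take; rewrite mem_enum.
have S_card : #|[set j in s]| = r by rewrite cardsE (card_uniqP s_uniq).
have S_supp : [set j in s] \subset rsupp X.
  by apply: subset_trans T_supp; apply/subsetP => j; rewrite inE => /s_sub.
apply: (orth_basis0 (gp _ S_supp S_card)); first by rewrite size_map -cardE.
move=> v /mapP[j]; rewrite mem_enum inE => /s_sub jT ->.
exact: T_orth.
Qed.

Definition coord_embed (R : fieldType) (n : nat) (I : {set 'I_n})
  : 'M[R]_(n, #|I|) := colsub (@enum_val _ (mem I)) 1%:M.

Lemma colsI_embed (R : realFieldType) (m n : nat) (A : 'M[R]_(m, n))
    (I : {set 'I_n}) :
  colsI A I = A *m coord_embed R I.
Proof. by rewrite /colsI /coord_embed mulmx_colsub mulmx1. Qed.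

Lemma coord_embed_out (R : fieldType) (n : nat) (I : {set 'I_n})
    (j : 'I_n) (c : 'I_#|I|) :
  j \notin I -> coord_embed R I j c = 0.
Proof.
move=> jI; rewrite !mxE; case: eqP => // j_eq.
by move: jI; rewrite j_eq enum_valP.
Qed.

Lemma coord_embed_orthonormal (R : fieldType) (n : nat) (I : {set 'I_n}) :
  (coord_embed R I)^T *m coord_embed R I = 1%:M.
Proof.
apply/matrixP => c d; rewrite !mxE (bigD1 (enum_val c)) //= big1 => [|j jc].
  by rewrite !mxE eqxx mul1r addr0 (inj_eq enum_val_inj).
by rewrite !mxE (negPf jc) mul0r.
Qed.

(* When at least r indices of supp X lie outside I, the columns of
   [E_I X] are linearly independent: a relation E_I a + X b = 0 read on the
   rows of supp X \ I gives X_j b = 0 there, so b = 0 by general position,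
   and then a = 0 because E_I is injective. *)
Lemma embed_general_position_inj (R : realFieldType) (n r : nat)
    (X : 'M[R]_(n, r)) (I : {set 'I_n}) (a : 'cV[R]_#|I|) (b : 'cV[R]_r) :
  rows_general_position X -> (r <= #|rsupp X :\: I|)%N ->
  coord_embed R I *m a + X *m b = 0 -> a = 0 /\ b = 0.
Proof.
move=> gp many_out rel.
have b0 : b = 0.
  apply: (general_position_orth0 gp (subsetDl _ _) many_out) => j.
  rewrite in_setD => /andP[jI _]; apply/rowP => c; rewrite ord1.
  have /colP/(_ j) := rel.
  rewrite !mxE big1 ?add0r => [Xb_j|c' _]; last by rewrite coord_embed_out ?mul0r.
  by rewrite -[RHS]Xb_j; apply: eq_bigr => c' _; rewrite mxE.
split=> //; move: rel; rewrite b0 mulmx0 addr0 => /(congr1 (mulmx (coord_embed R I)^T)).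
by rewrite mulmxA coord_embed_orthonormal mul1mx mulmx0.
Qed.

Lemma rank_embed_general_position (R : realFieldType) (n r : nat)
    (X : 'M[R]_(n, r)) (I : {set 'I_n}) :
  rows_general_position X -> (r <= #|rsupp X :\: I|)%N ->
  \rank (row_mx (coord_embed R I) X) = (#|I| + r)%N.
Proof.
move=> gp many_out; rewrite -mxrank_tr; apply/eqP.
rewrite -[_ == _]/(row_free _) -kermx_eq0; apply/eqP/row_matrixP => i.
rewrite row0; set w := row i _.
have /sub_kermxP wM0 : (w <= kermx (row_mx (coord_embed R I) X)^T)%MS.
  exact: row_sub.
rewrite -[w]hsubmxK in wM0 *.
have : coord_embed R I *m (lsubmx w)^T + X *m (rsubmx w)^T = 0.
  by rewrite -mul_row_col -tr_row_mx -[LHS]trmxK trmx_mul trmxK wM0 trmx0.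
case/(embed_general_position_inj gp many_out) => /eqP aT0 /eqP bT0.
by move: aT0 bT0; rewrite !trmx_eq0 => /eqP-> /eqP->; rewrite row_mx0.
Qed.

Lemma embed_row_supported (R : realFieldType) (n r : nat) (X : 'M[R]_(n, r))
    (I : {set 'I_n}) (j : 'I_n) (c : 'I_(#|I| + r)) :
  j \notin I :|: rsupp X -> row_mx (coord_embed R I) X j c = 0.
Proof.
rewrite in_setU negb_or => /andP[jI jS]; rewrite -[c]splitK.
case: (split c) => c' /=; first by rewrite row_mxEl coord_embed_out.
rewrite row_mxEr; move: jS; rewrite inE negbK => /eqP/rowP/(_ c').
by rewrite !mxE.
Qed.

Lemma rank_embed_deficient (R : realFieldType) (n r : nat) (X : 'M[R]_(n, r))
    (I : {set 'I_n}) :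
  rows_general_position X ->
  (\rank (row_mx (coord_embed R I) X) < #|I| + r)%N <->
  (#|rsupp X :\: I| < r)%N.
Proof.
move=> gp; split=> [|few_out].
  apply: contraTT; rewrite -!leqNgt => many_out.
  by rewrite (rank_embed_general_position gp many_out).
have := rank_row_supported (@embed_row_supported _ _ _ X I).
have := cardsID I (rsupp X); rewrite cardsU setIC; lia.
Qed.

(* The theorem: [A_I B] = A [E_I X], A preserves the rank of [E_I X] since
   its rows live on I u supp X (at most 2k - r + l indices), and
   |S \ I| < r is |I n S| >= k - r + 1. *)
Theorem theorem1 (R : realFieldType) (m n r k l : nat)
  (A : 'M[R]_(m, n)) (X : 'M[R]_(n, r)) (I : {set 'I_n}) :
  (0 < m)%N -> (0 < n)%N -> (0 < r)%N -> (0 < k)%N ->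
  (r <= m)%N -> (m < n)%N -> (r <= k)%N ->
  #|rsupp X| = k ->
  \rank (A *m X) = r ->
  (1 <= l)%N -> (l <= r)%N ->
  lower_ric_lt1 (2 * k - r + l) A ->
  rows_general_position X ->
  (#|I| <= minn (2 * (k - r) + l) k)%N ->
  (#|I :\: rsupp X| <= k - r + l)%N ->
  ((k - r + 1 <= #|I :&: rsupp X|)%N <->
   (\rank (row_mx (colsI A I) (A *m X)) < #|I| + r)%N).
Proof.
move=> _ _ _ _ _ _ r_le_k supp_card _ _ _ ric gp _ few_outside.
have union_small : (#|I :|: rsupp X| <= 2 * k - r + l)%N.
  by rewrite cardsU; have := cardsID (rsupp X) I; lia.
rewrite colsI_embed -mul_mx_row.
rewrite (rank_mul_lower_ric ric union_small (@embed_row_supported _ _ _ X I)).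
rewrite rank_embed_deficient //.
have := cardsID I (rsupp X); rewrite setIC; lia.
Qed.
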